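(* Let $\mathbb{K}$ be a non-Archimedean valued field and let $G$ be a discrete group. Then $G$ is normed $\mathbb{K}$-amenable if and only if $H^n_b(G, E) = 0$ for every dual normed $\mathbb{K}[G]$-module $E$ and all $n \geq 1$.
   Context: A non-Archimedean valued field is a field $\mathbb{K}$ with a map $|\cdot|_\mathbb{K}:\mathbb{K}\to\mathbb{R}_{\ge 0}$ with $|x|_\mathbb{K}=0$ iff $x=0$, $|x+y|_\mathbb{K}\le\max\{|x|_\mathbb{K},|y|_\mathbb{K}\}$, $|xy|_\mathbb{K}=|x|_\mathbb{K}|y|_\mathbb{K}$ (not assumed complete). A normed $\mathbb{K}$-vector space is a $\mathbb{K}$-vector space $E$ with a norm $\|\cdot\|$ satisfying $\|x\|=0$ iff $x=0$, the ultrametric inequality $\|x+y\|\le\max\{\|x\|,\|y\|\}$, and $\|\alpha x\|=|\alpha|_\mathbb{K}\|x\|$ (the norm need not take values in $|\mathbb{K}|_\mathbb{K}$). A normed $\mathbb{K}[G]$-module is a normed $\mathbb{K}$-vector space on which $G$ acts by linear isometries (no continuity required). For normed spaces, the topological dual $E^*$ carries the operator norm $\|T\|_{op}=\inf\{C\ge 0: |Tx|_\mathbb{K}\le C\|x\|\ \forall x\}$, and if $E$ is a normed $\mathbb{K}[G]$-module, $E^*$ is one with $(g\cdot\lambda)(x)=\lambda(g^{-1}x)$. A dual normed $\mathbb{K}[G]$-module is one isometrically $G$-isomorphic to the dual of a normed $\mathbb{K}[G]$-module. For a discrete group $G$ and normed $\mathbb{K}[G]$-module $E$, let $C^n_b(G,E)$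 be the space of bounded maps $G^{n+1}\to E$, with $G$-action $(g\cdot f)(g_0,\dots,g_n)=g\cdot f(g^{-1}g_0,\dots,g^{-1}g_n)$ and coboundary $\delta^n f(g_0,\dots,g_{n+1})=\sum_{i=0}^{n+1}(-1)^i f(g_0,\dots,\widehat{g_i},\dots,g_{n+1})$. The bounded cohomology $H^\bullet_b(G,E)$ is the cohomology of the subcomplex of $G$-invariants $C^\bullet_b(G,E)^G$. For a group $G$ (here discrete), $C_b(G,\mathbb{K})$ denotes bounded (continuous) functions $G\to\mathbb{K}$ with the sup norm, with $G$ acting by $(g\cdot f)(x)=f(g^{-1}x)$. A normed $\mathbb{K}$-mean on $G$ is a bounded linear map $m:C_b(G,\mathbb{K})\to\mathbb{K}$ with $m(\mathbbm{1}_G)=1$; it is left-invariant if $m(g\cdot f)=m(f)$ for all $g,f$. $G$ is normed $\mathbb{K}$-amenable if it admits a left-invariant normed $\mathbb{K}$-mean. *)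

From HB Require Import structures.
From mathcomp Require Import all_boot all_order all_algebra.
From mathcomp Require Import boolp classical_sets reals.
Set Implicit Arguments. Unset Strict Implicit. Unset Printing Implicit Defensive.
Import Order.TTheory GRing.Theory Num.Theory.
Local Open Scope ring_scope.
Local Open Scope classical_set_scope.

Section Defs.
Variable R : realType.

Definition is_na_abs (K : fieldType) (absK : K -> R) : Prop :=
  [/\ forall x, 0 <= absK x,
      forall x, absK x = 0 <-> x = 0,
      forall x y, absK (x + y) <= Num.max (absK x) (absK y) &
      forall x y, absK (x * y) = absK x * absK y].

Record group_str (G : Type) := GroupStr {
  gmul : G -> G -> G;
  ginv : G -> G;
  gone : G;
  gmulA : forall x y z, gmul x (gmul y z) = gmul (gmul x y) z;
  gmul1 : forall x, gmul gone x = x;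
  gmulV : forall x, gmul (ginv x) x = gone }.

Variable K : fieldType.
Variable absK : K -> R.

Definition is_na_norm (E : lmodType K) (nE : E -> R) : Prop :=
  [/\ forall x, 0 <= nE x,
      forall x, nE x = 0 <-> x = 0,
      forall x y, nE (x + y) <= Num.max (nE x) (nE y) &
      forall (a : K) x, nE (a *: x) = absK a * nE x].

Variable G : Type.
Variable grp : group_str G.

Definition normed_KG_module (E : lmodType K) (nE : E -> R) (act : G -> E -> E)
  : Prop :=
  [/\ is_na_norm nE,
      forall g (a : K) x y, act g (a *: x + y) = a *: act g x + act g y,
      forall g x, nE (act g x) = nE x,
      forall x, act (gone grp) x = x &
      forall g h x, act (gmul grp g h) x = act g (act h x)].

Definition lin_functional (F : lmodType K) (l : F -> K) : Prop :=
  forall (a : K) x y, l (a *: x + y) = a * l x + l y.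

Definition bounded_functional (F : lmodType K) (nF : F -> R) (l : F -> K)
  : Prop := exists C : R, forall x, absK (l x) <= C * nF x.

Definition opnorm (F : lmodType K) (nF : F -> R) (l : F -> K) : R :=
  inf [set C : R | 0 <= C /\ forall x, absK (l x) <= C * nF x].

(* E is a dual normed K[G]-module: isometrically G-isomorphic (via Phi)
   to the topological dual F^* of some normed K[G]-module F, where
   F^* = bounded linear functionals with the operator norm and the
   contragredient action (g.l)(x) = l(g^-1 x). *)
Definition dual_KG_module (E : lmodType K) (nE : E -> R) (actE : G -> E -> E)
  : Prop :=
  normed_KG_module nE actE /\
  exists (F : lmodType K) (nF : F -> R) (actF : G -> F -> F) (Phi : E -> F -> K),
  normed_KG_module nF actF /\
      (forall e, lin_functional (Phi e) /\ bounded_functional nF (Phi e)) /\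
      (forall (a : K) e1 e2,
        Phi (a *: e1 + e2) = (fun x => a * Phi e1 x + Phi e2 x)) /\
      (forall e1 e2, Phi e1 = Phi e2 -> e1 = e2) /\
      (forall l : F -> K, lin_functional l -> bounded_functional nF l ->
        exists e, Phi e = l) /\
      (forall e, nE e = opnorm nF (Phi e)) /\
      (forall g e, Phi (actE g e) = (fun x => Phi e (actF (ginv grp g) x))).

(* bounded cohomology: homogeneous cochains G^{n+1} -> E *)
Section Cohom.
Variables (E : lmodType K) (nE : E -> R) (actE : G -> E -> E).

Definition cochain (n : nat) := ('I_n.+1 -> G) -> E.

Definition bounded_cochain n (f : cochain n) : Prop :=
  exists C : R, forall x, nE (f x) <= C.

Definition invariant_cochain n (f : cochain n) : Prop :=
  forall g x, actE g (f (fun i => gmul grp (ginv grp g) (x i))) = f x.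

Definition bcochain n (f : cochain n) : Prop :=
  bounded_cochain f /\ invariant_cochain f.

Definition coboundary n (f : cochain n) : cochain n.+1 :=
  fun x => \sum_(i < n.+2) ((-1) ^+ i : K) *: f (fun j => x (lift i j)).

Definition Hb_vanishes (n : nat) : Prop :=
  match n with
  | 0 => forall f : cochain 0, bcochain f -> coboundary f = (fun _ => 0) ->
           f = (fun _ => 0)
  | m.+1 => forall f : cochain m.+1, bcochain f ->
           coboundary f = (fun _ => 0) ->
           exists h : cochain m, bcochain h /\ coboundary h = f
  end.
End Cohom.

Definition bounded_fun (f : G -> K) : Prop := exists C : R, forall x, absK (f x) <= C.

Definition supnorm (f : G -> K) : R := sup [set absK (f x) | x in [set: G]].

Definition left_inv_normed_mean (m : (G -> K) -> K) : Prop :=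
  [/\ forall (a : K) f1 f2, bounded_fun f1 -> bounded_fun f2 ->
        m (fun x => a * f1 x + f2 x) = a * m f1 + m f2,
      exists C : R, forall f, bounded_fun f -> absK (m f) <= C * supnorm f,
      m (fun _ => 1) = 1 &
      forall g f, bounded_fun f -> m (fun x => f (gmul grp (ginv grp g) x)) = m f].

Definition normed_amenable : Prop := exists m, left_inv_normed_mean m.

End Defs.

From HB Require Import structures.
From mathcomp Require Import all_boot all_order all_algebra.
From mathcomp Require Import boolp classical_sets functions reals.
From mathcomp Require Import ring.
Set Implicit Arguments. Unset Strict Implicit. Unset Printing Implicit Defensive.
Import Order.TTheory GRing.Theory Num.Theory.
Local Open Scope ring_scope.
Local Open Scope classical_set_scope.

(* Integrating against a left-invariant mean m is possible weakly in a dual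
   module E = F^*: a bounded family u : G -> E has the average whose value at
   z in F is m(g |-> <u g, z>), and averaging commutes with the coboundary and
   the action.  If f is a bounded invariant (n+1)-cocycle, each cone
   f(g, -) is a primitive of f, so the average over g of these cones is a
   bounded invariant primitive of f.
   Conversely, take F = l^oo(G)/K and E = F^*.  The 1-cocycle
   (x0, x1) |-> ev_x1 - ev_x0 of point evaluations then has a bounded
   invariant primitive h, and phi |-> phi(1) - h(1)(phi - phi(1)) is a
   left-invariant normed mean. *)

Section NonArchimedeanAbs.
Variables (R : realType) (K : fieldType) (absK : K -> R).
Hypothesis hK : is_na_abs absK.

Lemma absK_ge0 x : 0 <= absK x. Proof. by case: hK. Qed.
Lemma absK0 : absK 0 = 0. Proof. by case: hK => _ h _ _; exact: (proj2 (h 0)). Qed.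
Lemma absK_eq0 x : absK x = 0 -> x = 0.
Proof. by case: hK => _ h _ _; exact: (proj1 (h x)). Qed.
Lemma absKD x y : absK (x + y) <= Num.max (absK x) (absK y). Proof. by case: hK. Qed.
Lemma absKM x y : absK (x * y) = absK x * absK y. Proof. by case: hK. Qed.

Lemma absK1 : absK 1 = 1.
Proof.
have nz : absK 1 != 0 by apply/eqP => /absK_eq0/eqP; rewrite oner_eq0.
by apply: (mulIf nz); rewrite mul1r -absKM mulr1.
Qed.

Lemma absKN x : absK (- x) = absK x.
Proof.
suff absN1 : absK (-1) = 1 by rewrite -mulN1r absKM absN1 mul1r.
have : absK (-1) ^+ 2 == 1 by rewrite expr2 -absKM mulrNN mulr1 absK1.
rewrite sqrf_eq1 => /orP [/eqP //|/eqP absN1].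
by have := absK_ge0 (-1); rewrite absN1 ler0N1.
Qed.

Lemma absKB x y : absK (x - y) <= Num.max (absK x) (absK y).
Proof. by rewrite -(absKN y) absKD. Qed.

Lemma homogeneous_of_subhomogeneous (T : lmodType K) (N : T -> R) :
  (forall x, 0 <= N x) -> (forall a x, N (a *: x) <= absK a * N x) ->
  forall a x, N (a *: x) = absK a * N x.
Proof.
move=> N_ge0 N_le a x; apply/le_anti; rewrite N_le /=.
have [->|a_neq0] := eqVneq a 0; first by rewrite absK0 mul0r N_ge0.
have absKV : absK a * absK a^-1 = 1 by rewrite -absKM mulfV // absK1.
rewrite -[leRHS]mul1r -absKV -mulrA ler_wpM2l ?absK_ge0 //.
by rewrite -[in leLHS](scalerK a_neq0 x) N_le.
Qed.

Section BoundedFunctions.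
Variable G : Type.
Implicit Types f : G -> K.

Lemma bounded_fun_lin a f1 f2 : bounded_fun absK f1 -> bounded_fun absK f2 ->
  bounded_fun absK (fun x => a * f1 x + f2 x).
Proof.
move=> [C1 h1] [C2 h2]; exists (Num.max (absK a * C1) C2) => x.
by apply: le_trans (absKD _ _) (le_max2 _ (h2 x)); rewrite absKM ler_wpM2l ?absK_ge0.
Qed.

Lemma bounded_funB f1 f2 : bounded_fun absK f1 -> bounded_fun absK f2 ->
  bounded_fun absK (fun x => f1 x - f2 x).
Proof.
move=> [C1 h1] [C2 h2]; exists (Num.max C1 C2) => x.
exact: le_trans (absKB _ _) (le_max2 (h1 x) (h2 x)).
Qed.

Lemma bounded_fun_cst c : bounded_fun absK (fun _ : G => c).
Proof. by exists (absK c). Qed.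

Lemma bounded_fun_comp f (u : G -> G) :
  bounded_fun absK f -> bounded_fun absK (fun x => f (u x)).
Proof. by move=> [C hC]; exists C => x; apply: hC. Qed.

Lemma supnorm_ub f x : bounded_fun absK f -> absK (f x) <= supnorm absK f.
Proof.
by move=> [C hC]; apply: ub_le_sup; [exists C => _ [y _ <-]| exists x].
Qed.

Lemma supnorm_le (x0 : G) f D :
  (forall x, absK (f x) <= D) -> supnorm absK f <= D.
Proof. by move=> h; apply: ge_sup; [exists (absK (f x0)), x0|move=> _ [y _ <-]]. Qed.

Lemma supnorm_ge0 (x0 : G) f : bounded_fun absK f -> 0 <= supnorm absK f.
Proof. by move=> hb; apply: le_trans (absK_ge0 _) (supnorm_ub x0 hb). Qed.

End BoundedFunctions.

Section OperatorNorm.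
Variables (F : lmodType K) (nF : F -> R).
Hypothesis hF : is_na_norm absK nF.
Implicit Types l : F -> K.

Lemma lin_functional0 l : lin_functional l -> l 0 = 0.
Proof.
move=> hl; have := hl 1 0 0; rewrite scaler0 addr0 mul1r => l0D.
by apply: (addrI (l 0)); rewrite addr0 -l0D.
Qed.

Lemma opnorm_le l D : 0 <= D -> (forall x, absK (l x) <= D * nF x) ->
  opnorm absK nF l <= D.
Proof. by move=> D0 hD; apply: ge_inf; [exists 0 => C []|split]. Qed.

Lemma opnorm_bounds_neq0 l : bounded_functional absK nF l ->
  [set C : R | 0 <= C /\ forall x, absK (l x) <= C * nF x] !=set0.
Proof.
have nF_ge0 x : 0 <= nF x by case: hF.
move=> [C hC]; exists (Num.max C 0); split=> [|x]; first by rewrite le_max lexx orbT.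
by apply: le_trans (hC x) _; rewrite ler_wpM2r ?nF_ge0 ?le_max ?lexx.
Qed.

Lemma opnorm_ge0 l : bounded_functional absK nF l -> 0 <= opnorm absK nF l.
Proof. by move=> hb; apply: lb_le_inf; [exact: opnorm_bounds_neq0|move=> C []]. Qed.

Lemma opnorm_ub l x : lin_functional l -> bounded_functional absK nF l ->
  absK (l x) <= opnorm absK nF l * nF x.
Proof.
move=> hl hb; have [nFx0|nFx_neq0] := eqVneq (nF x) 0.
  have -> : x = 0 by case: hF => _ h _ _; exact: (proj1 (h x)).
  by rewrite lin_functional0 // absK0 mulr_ge0 ?opnorm_ge0 //; case: hF.
have nFx_gt0 : 0 < nF x by rewrite lt_def nFx_neq0 /=; case: hF.
rewrite -ler_pdivrMr //; apply: lb_le_inf; first exact: opnorm_bounds_neq0.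
by move=> C [_ hC]; rewrite ler_pdivrMr.
Qed.

End OperatorNorm.
End NonArchimedeanAbs.

Section GroupLaws.
Variables (G : Type) (grp : group_str G).
Local Notation "x * y" := (gmul grp x y).
Local Notation "x ^-1" := (ginv grp x).
Local Notation "1" := (gone grp).

Lemma gmulgV x : x * x^-1 = 1.
Proof.
rewrite -(gmul1 grp (x * x^-1)) -{1}(gmulV grp x^-1) -gmulA (gmulA grp x^-1).
by rewrite gmulV gmul1 gmulV.
Qed.

Lemma gmulg1 x : x * 1 = x.
Proof. by rewrite -(gmulV grp x) gmulA gmulgV gmul1. Qed.

Lemma ginvgK x : (x^-1)^-1 = x.
Proof. by rewrite -[LHS]gmulg1 -(gmulV grp x) gmulA gmulV gmul1. Qed.

Lemma gmulKg x y : x^-1 * (x * y) = y.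
Proof. by rewrite gmulA gmulV gmul1. Qed.

Lemma gmulKVg x y : x * (x^-1 * y) = y.
Proof. by rewrite gmulA gmulgV gmul1. Qed.

Lemma ginvMg x y : (x * y)^-1 = y^-1 * x^-1.
Proof.
have xyK : x * y * (y^-1 * x^-1) = 1 by rewrite -gmulA gmulKVg gmulgV.
by rewrite -[LHS]gmulg1 -[in LHS]xyK gmulKg.
Qed.

Lemma ginvg1 : 1^-1 = 1.
Proof. by rewrite -[LHS](gmul1 grp) gmulgV. Qed.

End GroupLaws.

Lemma isometric_of_contractive (R : numDomainType) (G : Type) (grp : group_str G)
    (T : Type) (N : T -> R) (act : G -> T -> T) :
  (forall g x, act (ginv grp g) (act g x) = x) ->
  (forall g x, N (act g x) <= N x) -> forall g x, N (act g x) = N x.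
Proof. by move=> actK N_act g x; apply/le_anti; rewrite N_act -{1}(actK g x) N_act. Qed.

Section Coboundary.
Variables (K : fieldType) (G : Type) (E : lmodType K).

Definition tcons n (g : G) (y : 'I_n -> G) : 'I_n.+1 -> G :=
  fun i => if unlift ord0 i is Some j then y j else g.

Lemma tcons_lift n (g : G) (y : 'I_n -> G) : (fun j => tcons g y (lift ord0 j)) = y.
Proof. by apply: funext => j; rewrite /tcons liftK. Qed.

Lemma tcons_lift_lift n (g : G) (x : 'I_n.+1 -> G) (i : 'I_n.+1) :
  (fun j => tcons g x (lift (lift ord0 i) j)) = tcons g (fun j => x (lift i j)).
Proof.
apply: funext => j; rewrite /tcons; case: (unliftP ord0 j) => [j'|] ->.
  have -> : lift (lift ord0 i) (lift ord0 j') = lift ord0 (lift i j').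
    by apply: val_inj; rewrite /= /bump /= !add1n ltnS addnS.
  by rewrite !liftK.
have -> : lift (lift ord0 i) ord0 = ord0 :> 'I_n.+2 by apply: val_inj.
by rewrite unlift_none.
Qed.

Lemma tcons_map n (g : G) (y : 'I_n -> G) (u : G -> G) :
  (fun i => u (tcons g y i)) = tcons (u g) (fun i => u (y i)).
Proof. by apply: funext => i; rewrite /tcons; case: unlift. Qed.

Lemma coboundary_tcons n (f : cochain G E n.+1) g x :
  coboundary f (tcons g x) = f x - coboundary (fun y => f (tcons g y)) x.
Proof.
rewrite /coboundary big_ord_recl expr0 scale1r tcons_lift -sumrN.
congr (_ + _); apply: eq_bigr => i _.
by rewrite tcons_lift_lift lift0 exprS mulN1r scaleNr.
Qed.

Lemma coboundary_cone n (f : cochain G E n.+1) g :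
  coboundary f = (fun _ => 0) -> coboundary (fun y => f (tcons g y)) = f.
Proof.
move=> f_cocycle; apply: funext => x.
by apply/eqP; rewrite eq_sym -subr_eq0 -(coboundary_tcons f g) f_cocycle.
Qed.

Lemma coboundary0E (psi : cochain G E 0) x :
  coboundary psi x = psi (fun=> x ord_max) - psi (fun=> x ord0).
Proof.
rewrite /coboundary !big_ord_recl big_ord0 expr0 expr1 scale1r scaleN1r addr0.
by congr (psi _ - psi _); apply: funext => j; congr x; apply: val_inj; rewrite (ord1 j).
Qed.

Lemma coboundary_coboundary0 (psi : cochain G E 0) :
  coboundary (coboundary psi) = (fun=> 0).
Proof.
apply: funext => x; rewrite [LHS]/coboundary !big_ord_recl big_ord0 !coboundary0E /=.
have -> : lift ord0 ord_max = ord_max :> 'I_3 by apply: val_inj.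
have -> : lift (lift ord0 ord0) ord_max = ord_max :> 'I_3 by apply: val_inj.
have -> : lift (lift ord0 ord0) ord0 = ord0 :> 'I_3 by apply: val_inj.
have -> : lift (lift ord0 (lift ord0 ord0)) ord_max = lift ord0 ord0 :> 'I_3.
  by apply: val_inj.
have -> : lift (lift ord0 (lift ord0 ord0)) ord0 = ord0 :> 'I_3 by apply: val_inj.
rewrite expr0 [bump 0 0]/= [bump 0 1]/= expr1 sqrrN expr1n.
rewrite scale1r scaleN1r scale1r addr0 opprB.
set a := psi _; set b := psi _; set c := psi _.
by rewrite (addrC (c - a)) !subrKA subrr.
Qed.

End Coboundary.

Section WeakStarMean.
Variables (R : realType) (K : fieldType) (absK : K -> R) (G : Type) (grp : group_str G).
Hypothesis hK : is_na_abs absK.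

Variables (m : (G -> K) -> K) (Cm : R).
Hypothesis Cm_ge0 : 0 <= Cm.
Hypothesis m_lin : forall a f1 f2, bounded_fun absK f1 -> bounded_fun absK f2 ->
  m (fun x => a * f1 x + f2 x) = a * m f1 + m f2.
Hypothesis m_bound :
  forall f, bounded_fun absK f -> absK (m f) <= Cm * supnorm absK f.
Hypothesis m1 : m (fun _ => 1) = 1.
Hypothesis m_inv : forall g f, bounded_fun absK f ->
  m (fun x => f (gmul grp (ginv grp g) x)) = m f.

Variables (E : lmodType K) (nE : E -> R) (actE : G -> E -> E).
Variables (F : lmodType K) (nF : F -> R) (actF : G -> F -> F) (Phi : E -> F -> K).
Hypothesis hE : normed_KG_module absK grp nE actE.
Hypothesis hF : normed_KG_module absK grp nF actF.
Hypothesis Phi_bounded_linear :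
  forall e, lin_functional (Phi e) /\ bounded_functional absK nF (Phi e).
Hypothesis PhiD :
  forall a e1 e2, Phi (a *: e1 + e2) = (fun x => a * Phi e1 x + Phi e2 x).
Hypothesis Phi_inj : forall e1 e2, Phi e1 = Phi e2 -> e1 = e2.
Hypothesis Phi_onto : forall l, lin_functional l -> bounded_functional absK nF l ->
  exists e, Phi e = l.
Hypothesis nE_Phi : forall e, nE e = opnorm absK nF (Phi e).
Hypothesis Phi_act :
  forall g e, Phi (actE g e) = (fun x => Phi e (actF (ginv grp g) x)).

Lemma mean_cst c : m (fun _ => c) = c.
Proof.
have cst0 := bounded_fun_cst absK G 0.
have m0 : m (fun _ => 0) = 0.
  have := m_lin 1 cst0 cst0; rewrite mulr0 addr0 mul1r => m0D.
  by apply: (addrI (m (fun _ => 0))); rewrite addr0 -m0D.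
have := m_lin c (bounded_fun_cst absK G 1) cst0.
by rewrite mulr1 addr0 m0 m1 mulr1 addr0.
Qed.

Lemma nE_ge0 e : 0 <= nE e.
Proof. by case: hE => -[]. Qed.

Lemma Phi_ub e z : absK (Phi e z) <= nE e * nF z.
Proof.
have [Phi_lin Phi_bd] := Phi_bounded_linear e.
by rewrite nE_Phi; apply: opnorm_ub => //; case: hF.
Qed.

Definition nE_bounded (u : G -> E) := exists B, forall g, nE (u g) <= B.

Lemma bounded_fun_Phi u z : nE_bounded u -> bounded_fun absK (fun g => Phi (u g) z).
Proof.
move=> [B hB]; exists (B * nF z) => g; apply: le_trans (Phi_ub _ _) _.
by rewrite ler_wpM2r ?hB //; case: hF => -[].
Qed.

Lemma absK_mean_Phi u B z : (forall g, nE (u g) <= B) ->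
  absK (m (fun g => Phi (u g) z)) <= Cm * B * nF z.
Proof.
move=> hB; have hu : nE_bounded u by exists B.
apply: le_trans (m_bound (bounded_fun_Phi z hu)) _; rewrite -mulrA ler_wpM2l //.
apply: (supnorm_le (gone grp)) => g; apply: le_trans (Phi_ub _ _) _.
by rewrite ler_wpM2r ?hB //; case: hF => -[].
Qed.

(* Junk value 0 when no such element exists, e.g. for unbounded u. *)
Definition wmean (u : G -> E) : E :=
  xget 0 [set e | Phi e = fun z => m (fun g => Phi (u g) z)].

Lemma Phi_wmean u : nE_bounded u -> Phi (wmean u) = fun z => m (fun g => Phi (u g) z).
Proof.
move=> hu; apply: (@xgetPex _ 0 [set e | Phi e = _]); apply: Phi_onto.
  move=> a z1 z2; rewrite -m_lin; try exact: bounded_fun_Phi.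
  by congr m; apply: funext => g; case: (Phi_bounded_linear (u g)) => + _; apply.
by have [B hB] := hu; exists (Cm * B) => z; apply: absK_mean_Phi.
Qed.

Lemma nE_wmean u B : (forall g, nE (u g) <= B) -> nE (wmean u) <= Cm * B.
Proof.
move=> hB; have B_ge0 : 0 <= B by apply: le_trans (hB (gone grp)); apply: nE_ge0.
rewrite nE_Phi Phi_wmean; last by exists B.
by apply: opnorm_le; [rewrite mulr_ge0|move=> z; apply: absK_mean_Phi].
Qed.

Lemma nE_bounded_cst e : nE_bounded (fun _ => e).
Proof. by exists (nE e). Qed.

Lemma nE_bounded_lin a u v : nE_bounded u -> nE_bounded v ->
  nE_bounded (fun g => a *: u g + v g).
Proof.
case: hE => -[_ _ nED nEZ] _ _ _ _ [Bu hu] [Bv hv].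
exists (Num.max (absK a * Bu) Bv) => g; apply: le_trans (nED _ _) _.
by rewrite ge_max !le_max nEZ ler_wpM2l ?absK_ge0 ?hu ?hv ?orbT.
Qed.

Lemma nE_bounded_sum (I : Type) (r : seq I) (c : I -> K) (u : I -> G -> E) :
  (forall i, nE_bounded (u i)) -> nE_bounded (fun g => \sum_(i <- r) c i *: u i g).
Proof.
move=> hu; elim: r => [|i r IH].
  by under eq_fun do rewrite big_nil; apply: nE_bounded_cst.
by under eq_fun do rewrite big_cons; apply: nE_bounded_lin.
Qed.

Lemma wmean_cst e : wmean (fun _ => e) = e.
Proof.
apply: Phi_inj; rewrite Phi_wmean; last exact: nE_bounded_cst.
by apply: funext => z; rewrite mean_cst.
Qed.

Lemma wmean_lin a u v : nE_bounded u -> nE_bounded v ->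
  wmean (fun g => a *: u g + v g) = a *: wmean u + wmean v.
Proof.
move=> hu hv; have huv := nE_bounded_lin a hu hv.
apply: Phi_inj; rewrite PhiD !Phi_wmean //.
apply: funext => z; rewrite -m_lin; try exact: bounded_fun_Phi.
by congr m; apply: funext => g; rewrite PhiD.
Qed.

Lemma wmean_sum (I : Type) (r : seq I) (c : I -> K) (u : I -> G -> E) :
  (forall i, nE_bounded (u i)) ->
  wmean (fun g => \sum_(i <- r) c i *: u i g) = \sum_(i <- r) c i *: wmean (u i).
Proof.
move=> hu; elim: r => [|i r IH].
  by under eq_fun do rewrite big_nil; rewrite big_nil wmean_cst.
under eq_fun do rewrite big_cons.
have hsum := nE_bounded_sum r c hu.
by rewrite big_cons wmean_lin ?IH.
Qed.

Lemma wmean_act g u : nE_bounded u -> wmean (fun q => actE g (u q)) = actE g (wmean u).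
Proof.
move=> hu; have hgu : nE_bounded (fun q => actE g (u q)).
  by have [B hB] := hu; exists B => q; case: hE => _ _ -> _ _.
apply: Phi_inj; rewrite Phi_act !Phi_wmean //; apply: funext => z.
by congr m; apply: funext => q; rewrite Phi_act.
Qed.

Lemma wmean_translate g u : nE_bounded u -> wmean (fun q => u (gmul grp g q)) = wmean u.
Proof.
move=> hu; have hgu : nE_bounded (fun q => u (gmul grp g q)).
  by have [B hB] := hu; exists B.
apply: Phi_inj; rewrite !Phi_wmean //; apply: funext => z.
by rewrite -(m_inv (ginv grp g) (bounded_fun_Phi z hu)) ginvgK.
Qed.

Definition cone_mean n (f : cochain G E n.+1) : cochain G E n :=
  fun y => wmean (fun g => f (tcons g y)).

Lemma bcochain_cone_mean n (f : cochain G E n.+1) :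
  bcochain grp nE actE f -> bcochain grp nE actE (cone_mean f).
Proof.
move=> [[B hB] f_inv]; split.
  by exists (Cm * B) => y; apply: nE_wmean.
move=> g y; rewrite /cone_mean -wmean_act; last by exists B.
have f_tcons q : actE g (f (tcons q (fun i => gmul grp (ginv grp g) (y i)))) =
                 f (tcons (gmul grp g q) y).
  by rewrite -(f_inv g (tcons (gmul grp g q) y)) tcons_map gmulKg.
under eq_fun do rewrite f_tcons.
by apply: (wmean_translate g (u := fun q => f (tcons q y))); exists B.
Qed.

Lemma coboundary_cone_mean n (f : cochain G E n.+1) :
  bounded_cochain nE f -> coboundary f = (fun _ => 0) -> coboundary (cone_mean f) = f.
Proof.
move=> [B hB] f_cocycle; apply: funext => x.
rewrite /coboundary /cone_mean.
rewrite -(wmean_sum _ (fun i : 'I_n.+2 => (-1) ^+ i)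
             (u := fun i g => f (tcons g (fun j => x (lift i j))))); last first.
  by move=> i; exists B.
rewrite -[RHS]wmean_cst; congr wmean; apply: funext => g.
exact: (congr1 (fun c => c x) (coboundary_cone g f_cocycle)).
Qed.

End WeakStarMean.

Lemma Hb_vanishes_of_amenable (R : realType) (K : fieldType) (absK : K -> R)
    (hK : is_na_abs absK) (G : Type) (grp : group_str G) :
  normed_amenable absK grp ->
  forall (E : lmodType K) (nE : E -> R) (actE : G -> E -> E),
  dual_KG_module absK grp nE actE -> forall n, (1 <= n)%N -> Hb_vanishes grp nE actE n.
Proof.
move=> [m [m_lin [C m_bound] m1 m_inv]] E nE actE.
move=> [hE [F [nF [actF [Phi [hF dual_F]]]]]].
move: dual_F => [Phi_bl [PhiD [Phi_inj [Phi_onto [nE_Phi Phi_act]]]]].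
case=> [//|n] _ f f_bc f_cocycle.
have C_ge0 : 0 <= Num.max C 0 by rewrite le_max lexx orbT.
have m_bound' phi :
    bounded_fun absK phi -> absK (m phi) <= Num.max C 0 * supnorm absK phi.
  move=> phi_bd; apply: le_trans (m_bound _ phi_bd) _.
  by rewrite ler_wpM2r ?(supnorm_ge0 hK (gone grp)) // le_max lexx.
exists (cone_mean m Phi f); split.
- exact: (bcochain_cone_mean hK C_ge0 m_lin m_bound' m_inv hE hF
           Phi_bl Phi_inj Phi_onto nE_Phi Phi_act f_bc).
- exact: (coboundary_cone_mean hK C_ge0 m_lin m_bound' m1 hE hF
           Phi_bl PhiD Phi_inj Phi_onto nE_Phi f_bc.1 f_cocycle).
Qed.

Section AmenabilityFromCohomology.
Variables (R : realType) (K : fieldType) (absK : K -> R) (G : Type) (grp : group_str G).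
Hypothesis hK : is_na_abs absK.
Local Notation e := (gone grp).

(* l^oo(G)/K: each class of bounded functions modulo constants is represented
   by its member vanishing at the identity. *)
Definition bounded_vanishing_at_e : {pred G -> K^o} :=
  fun f => `[< bounded_fun absK f /\ f e = 0 >].

Fact bounded_vanishing_at_e_submod_closed : submod_closed bounded_vanishing_at_e.
Proof.
split; first by apply/asboolP; split; [exact: bounded_fun_cst|].
move=> a f g /asboolP [bf f1] /asboolP [bg g1]; apply/asboolP.
split; first exact: bounded_fun_lin.
by have -> : (a *: f + g) e = a * f e + g e by []; rewrite f1 g1 mulr0 addr0.
Qed.

HB.instance Definition _ := GRing.isSubmodClosed.Build K (G -> K^o)
  bounded_vanishing_at_e bounded_vanishing_at_e_submod_closed.

Record linf := Linf {
  linf_val :> G -> K^o;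
  _ : linf_val \in bounded_vanishing_at_e }.
HB.instance Definition _ := [isSub for linf_val].
HB.instance Definition _ := [Choice of linf by <:].
HB.instance Definition _ := [SubChoice_isSubLmodule of linf by <:].

Lemma linfP (f g : linf) : f =1 g -> f = g.
Proof. by move=> fg; apply: val_inj; apply: funext. Qed.

Lemma linfE a (f g : linf) x : (a *: f + g) x = a * f x + g x.
Proof. by []. Qed.

Lemma linf_bounded (f : linf) : bounded_fun absK f.
Proof. by have /asboolP [] := valP f. Qed.

Lemma linf_at_e (f : linf) : f e = 0.
Proof. by have /asboolP [] := valP f. Qed.

Definition linf_norm (f : linf) := supnorm absK f.

Lemma linf_ub (f : linf) x : absK (f x) <= linf_norm f.
Proof. exact: supnorm_ub (linf_bounded f). Qed.

Lemma linf_norm_ge0 (f : linf) : 0 <= linf_norm f.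
Proof. exact: le_trans (absK_ge0 hK _) (linf_ub f e). Qed.

Lemma linf_normed : is_na_norm absK linf_norm.
Proof.
split.
- exact: linf_norm_ge0.
- move=> f; split=> [f0|->].
    apply: linfP => x; apply: (absK_eq0 hK); apply/le_anti.
    by rewrite absK_ge0 // -f0 linf_ub.
  apply/le_anti; rewrite linf_norm_ge0 andbT.
  by apply: (supnorm_le e) => x; rewrite absK0.
- move=> f g; apply: (supnorm_le e) => x.
  exact: le_trans (absKD hK _ _) (le_max2 (linf_ub _ _) (linf_ub _ _)).
- apply: (homogeneous_of_subhomogeneous hK linf_norm_ge0) => a f.
  apply: (supnorm_le e) => x; have -> : (a *: f) x = a * f x by [].
  by rewrite absKM // ler_wpM2l ?absK_ge0 ?linf_ub.
Qed.

Lemma linf_act_subproof g (f : linf) :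
  (fun x => f (gmul grp (ginv grp g) x) - f (ginv grp g)) \in bounded_vanishing_at_e.
Proof.
apply/asboolP; split; last by rewrite gmulg1 subrr.
apply: (bounded_funB hK); last exact: bounded_fun_cst.
exact: bounded_fun_comp (linf_bounded f).
Qed.

Definition linf_act g (f : linf) : linf := Linf (linf_act_subproof g f).

Lemma linf_actE g (f : linf) x :
  linf_act g f x = f (gmul grp (ginv grp g) x) - f (ginv grp g).
Proof. by []. Qed.

Lemma linf_act1 (f : linf) : linf_act e f = f.
Proof. by apply: linfP => x; rewrite linf_actE ginvg1 gmul1 linf_at_e subr0. Qed.

Lemma linf_actM g h (f : linf) : linf_act (gmul grp g h) f = linf_act g (linf_act h f).
Proof. by apply: linfP => x; rewrite !linf_actE ginvMg gmulA; ring. Qed.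

Lemma linf_actK g (f : linf) : linf_act (ginv grp g) (linf_act g f) = f.
Proof. by rewrite -linf_actM gmulV linf_act1. Qed.

Lemma linf_normed_module : normed_KG_module absK grp linf_norm linf_act.
Proof.
split.
- exact: linf_normed.
- by move=> g a f f'; apply: linfP => x; rewrite linfE !linf_actE !linfE; ring.
- apply: isometric_of_contractive linf_actK _ => g f; apply: (supnorm_le e) => x.
  by rewrite linf_actE; apply: le_trans (absKB hK _ _) _; rewrite ge_max !linf_ub.
- exact: linf_act1.
- exact: linf_actM.
Qed.

Definition bounded_linear : {pred linf -> K^o} :=
  fun l => `[< lin_functional l /\ bounded_functional absK linf_norm l >].

Lemma bounded_linearP (l : linf -> K^o) :
  l \in bounded_linear -> lin_functional l /\ bounded_functional absK linf_norm l.
Proof. by move/asboolP. Qed.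

Lemma opnorm_ub_bounded_linear (l : linf -> K^o) f : l \in bounded_linear ->
  absK (l f) <= opnorm absK linf_norm l * linf_norm f.
Proof.
by move=> /bounded_linearP [hl hb]; exact: (opnorm_ub hK linf_normed f hl hb).
Qed.

Fact bounded_linear_submod_closed : submod_closed bounded_linear.
Proof.
split.
  apply/asboolP; split=> [a x y|]; first by rewrite mulr0 addr0.
  by exists 0 => f; rewrite absK0 // mul0r.
move=> a u v u_bl v_bl; have uvE f : (a *: u + v) f = a * u f + v f by [].
apply/asboolP; split.
  have [[ul _] [vl _]] := (bounded_linearP u_bl, bounded_linearP v_bl).
  by move=> b f g; rewrite !uvE ul vl; ring.
exists (Num.max (absK a * opnorm absK linf_norm u) (opnorm absK linf_norm v)) => f.
have ub_au : absK (a * u f) <= absK a * opnorm absK linf_norm u * linf_norm f.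
  by rewrite absKM // -mulrA ler_wpM2l ?absK_ge0 ?opnorm_ub_bounded_linear.
rewrite uvE maxr_pMl ?linf_norm_ge0 //.
exact: le_trans (absKD hK _ _) (le_max2 ub_au (opnorm_ub_bounded_linear _ v_bl)).
Qed.

HB.instance Definition _ := GRing.isSubmodClosed.Build K (linf -> K^o)
  bounded_linear bounded_linear_submod_closed.

Record dual := Dual { dual_val :> linf -> K^o; _ : dual_val \in bounded_linear }.
HB.instance Definition _ := [isSub for dual_val].
HB.instance Definition _ := [Choice of dual by <:].
HB.instance Definition _ := [SubChoice_isSubLmodule of dual by <:].

Lemma dualP (l l' : dual) : l =1 l' -> l = l'.
Proof. by move=> ll'; apply: val_inj; apply: funext. Qed.

Lemma dualD (l l' : dual) f : (l + l') f = l f + l' f.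
Proof. by []. Qed.

Lemma dualZ a (l : dual) f : (a *: l) f = a * l f.
Proof. by []. Qed.

Lemma dualB (l l' : dual) f : (l - l') f = l f - l' f.
Proof. by []. Qed.

Lemma dual_bounded_linear (l : dual) :
  lin_functional l /\ bounded_functional absK linf_norm l.
Proof. exact/bounded_linearP/valP. Qed.

Definition dual_norm (l : dual) := opnorm absK linf_norm l.

Lemma dual_ub (l : dual) f : absK (l f) <= dual_norm l * linf_norm f.
Proof. exact/opnorm_ub_bounded_linear/valP. Qed.

Lemma dual_norm_ge0 (l : dual) : 0 <= dual_norm l.
Proof. exact: (opnorm_ge0 linf_normed (dual_bounded_linear l).2). Qed.

Lemma dual_normed : is_na_norm absK dual_norm.
Proof.
split.
- exact: dual_norm_ge0.
- move=> l; split=> [l0|->].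
    apply: dualP => f; apply: (absK_eq0 hK); apply/le_anti.
    by rewrite absK_ge0 // -(mul0r (linf_norm f)) -l0 dual_ub.
  apply/le_anti; rewrite dual_norm_ge0 andbT.
  by apply: opnorm_le => // f; rewrite absK0 ?mul0r.
- move=> l l'; apply: opnorm_le => [|f]; first by rewrite le_max dual_norm_ge0.
  rewrite dualD maxr_pMl ?linf_norm_ge0 //.
  exact: le_trans (absKD hK _ _) (le_max2 (dual_ub _ _) (dual_ub _ _)).
- apply: (homogeneous_of_subhomogeneous hK dual_norm_ge0) => a l.
  apply: opnorm_le => [|f]; first exact: mulr_ge0 (absK_ge0 hK a) (dual_norm_ge0 l).
  rewrite dualZ absKM // -mulrA.
  by rewrite ler_wpM2l ?absK_ge0 ?dual_ub.
Qed.

Lemma dual_act_subproof g (l : dual) :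
  (fun f => l (linf_act (ginv grp g) f)) \in bounded_linear.
Proof.
have [l_lin _] := dual_bounded_linear l.
apply/asboolP; split.
  by move=> a f f'; case: linf_normed_module => _ act_lin _ _ _; rewrite act_lin l_lin.
exists (dual_norm l) => f; case: linf_normed_module => _ _ act_iso _ _.
by rewrite -(act_iso (ginv grp g) f) dual_ub.
Qed.

Definition dual_act g (l : dual) : dual := Dual (dual_act_subproof g l).

Lemma dual_actE g (l : dual) f : dual_act g l f = l (linf_act (ginv grp g) f).
Proof. by []. Qed.

Lemma dual_act1 (l : dual) : dual_act e l = l.
Proof. by apply: dualP => f; rewrite dual_actE ginvg1 linf_act1. Qed.

Lemma dual_actM g h (l : dual) : dual_act (gmul grp g h) l = dual_act g (dual_act h l).
Proof. by apply: dualP => f; rewrite !dual_actE ginvMg linf_actM. Qed.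

Lemma dual_actK g (l : dual) : dual_act (ginv grp g) (dual_act g l) = l.
Proof. by rewrite -dual_actM gmulV dual_act1. Qed.

Lemma dual_normed_module : normed_KG_module absK grp dual_norm dual_act.
Proof.
split.
- exact: dual_normed.
- by move=> g a l l'; apply: dualP => f; rewrite dual_actE dualD dualZ.
- apply: isometric_of_contractive dual_actK _ => g l.
  apply: opnorm_le => [|f]; first exact: dual_norm_ge0.
  case: linf_normed_module => _ _ act_iso _ _.
  by rewrite dual_actE -(act_iso (ginv grp g) f) dual_ub.
- exact: dual_act1.
- exact: dual_actM.
Qed.

Lemma dual_KG_module_dual : dual_KG_module absK grp dual_norm dual_act.
Proof.
split; first exact: dual_normed_module.
exists (linf : lmodType K), linf_norm, linf_act, (fun l : dual => l : linf -> K).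
split; first exact: linf_normed_module.
split; first exact: dual_bounded_linear.
split; first by [].
split; first exact: val_inj.
split; last by [].
move=> l l_lin l_bd; have l_bl : l \in bounded_linear by apply/asboolP.
by exists (Dual l_bl).
Qed.

Lemma point_eval_subproof a : (fun f : linf => f a) \in bounded_linear.
Proof.
apply/asboolP; split=> [b f f'|]; first by rewrite linfE.
by exists 1 => f; rewrite mul1r linf_ub.
Qed.

Definition point_eval a : dual := Dual (point_eval_subproof a).

Lemma point_evalE a f : point_eval a f = f a.
Proof. by []. Qed.

Definition eval_cocycle : cochain G dual 1 :=
  coboundary (fun y => point_eval (y ord0)).

Lemma eval_cocycleE x : eval_cocycle x = point_eval (x ord_max) - point_eval (x ord0).
Proof. by rewrite /eval_cocycle coboundary0E. Qed.

Lemma bcochain_eval_cocycle : bcochain grp dual_norm dual_act eval_cocycle.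
Proof.
split.
  exists 1 => x; rewrite eval_cocycleE; apply: opnorm_le => // f.
  by rewrite dualB mul1r; apply: le_trans (absKB hK _ _) _; rewrite ge_max !linf_ub.
move=> g x; apply: dualP => f.
rewrite !eval_cocycleE dual_actE !dualB !point_evalE !linf_actE ginvgK !gmulKVg.
by ring.
Qed.

Section MeanOfPrimitive.
Variable h : cochain G dual 0.
Hypothesis h_inv : invariant_cochain grp dual_act h.
Hypothesis h_primitive : coboundary h = eval_cocycle.
Local Notation H a := (h (fun=> a)).

Lemma primitiveB a b : H b - H a = point_eval b - point_eval a.
Proof.
pose x (i : 'I_2) := if i == ord0 then a else b.
by have := congr1 (fun c => c x) h_primitive; rewrite /= coboundary0E eval_cocycleE.
Qed.

Lemma primitive_act g a : H (gmul grp g a) = dual_act g (H a).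
Proof. by rewrite -[LHS](h_inv g); under eq_fun do rewrite gmulKg. Qed.

Definition center (phi : G -> K) : linf := insubd 0 (fun x => phi x - phi e).

Lemma centerE phi : bounded_fun absK phi -> center phi =1 fun x => phi x - phi e.
Proof.
move=> phi_bd x; rewrite /center insubdK //; apply/asboolP.
by split; [exact: (bounded_funB hK phi_bd (bounded_fun_cst _ _ _))|rewrite subrr].
Qed.

Definition mean_of_primitive (phi : G -> K) : K := phi e - H e (center phi).

Lemma mean_of_primitiveE phi a : bounded_fun absK phi ->
  mean_of_primitive phi = phi a - H a (center phi).
Proof.
move=> phi_bd; have Hdiff : H a (center phi) - H e (center phi) = phi a - phi e.
  by rewrite -dualB primitiveB dualB !point_evalE !centerE // subrr subr0.
by rewrite /mean_of_primitive -(subrK (H e (center phi)) (H a _)) Hdiff; ring.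
Qed.

Lemma center_lin a phi1 phi2 : bounded_fun absK phi1 -> bounded_fun absK phi2 ->
  center (fun x => a * phi1 x + phi2 x) = a *: center phi1 + center phi2.
Proof.
move=> phi1_bd phi2_bd; have := bounded_fun_lin hK a phi1_bd phi2_bd.
by move=> phi_bd; apply: linfP => x; rewrite linfE !centerE //; ring.
Qed.

Lemma center_act g phi : bounded_fun absK phi ->
  center (fun x => phi (gmul grp (ginv grp g) x)) = linf_act g (center phi).
Proof.
move=> phi_bd; have := bounded_fun_comp (gmul grp (ginv grp g)) phi_bd.
by move=> phig_bd; apply: linfP => x; rewrite linf_actE !centerE // gmulg1; ring.
Qed.

Lemma linf_norm_center phi : bounded_fun absK phi ->
  linf_norm (center phi) <= supnorm absK phi.
Proof.
move=> phi_bd; apply: (supnorm_le e) => x; rewrite centerE //.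
by apply: le_trans (absKB hK _ _) _; rewrite ge_max !supnorm_ub.
Qed.

Lemma left_inv_normed_mean_of_primitive :
  left_inv_normed_mean absK grp mean_of_primitive.
Proof.
have [H_lin _] := dual_bounded_linear (H e).
split.
- move=> a phi1 phi2 phi1_bd phi2_bd.
  by rewrite /mean_of_primitive center_lin // H_lin; ring.
- exists (Num.max 1 (dual_norm (H e))) => phi phi_bd.
  have sup_ge0 := supnorm_ge0 hK e phi_bd; rewrite maxr_pMl // mul1r.
  apply: le_trans (absKB hK _ _) (le_max2 (supnorm_ub e phi_bd) _).
  apply: le_trans (dual_ub _ _) _.
  by apply: ler_wpM2l; [exact: dual_norm_ge0|exact: linf_norm_center].
- rewrite /mean_of_primitive; have -> : center (fun=> 1) = 0.
    by apply: linfP => x; rewrite centerE ?subrr //; exact: bounded_fun_cst.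
  by rewrite (lin_functional0 H_lin) subr0.
- move=> g phi phi_bd; have := bounded_fun_comp (gmul grp (ginv grp g)) phi_bd.
  move=> /(mean_of_primitiveE g) ->; have := primitive_act g e; rewrite gmulg1 => ->.
  by rewrite dual_actE center_act // linf_actK gmulV.
Qed.

End MeanOfPrimitive.

Lemma amenable_of_Hb1_vanishes :
  Hb_vanishes grp dual_norm dual_act 1 -> normed_amenable absK grp.
Proof.
move=> /(_ eval_cocycle bcochain_eval_cocycle (coboundary_coboundary0 _)).
move=> [h [[_ h_inv] h_primitive]].
by exists (mean_of_primitive h); apply: left_inv_normed_mean_of_primitive.
Qed.

End AmenabilityFromCohomology.

Theorem theorem1p4 (R : realType) (K : fieldType) (absK : K -> R)
  (hK : is_na_abs absK) (G : Type) (grp : group_str G) :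
  normed_amenable absK grp <->
  (forall (E : lmodType K) (nE : E -> R) (actE : G -> E -> E),
     dual_KG_module absK grp nE actE ->
     forall n : nat, (1 <= n)%N -> Hb_vanishes grp nE actE n).
Proof.
split; first exact: Hb_vanishes_of_amenable.
move=> Hb_vanish; apply: (amenable_of_Hb1_vanishes (hK := hK)).
exact: Hb_vanish _ _ _ (dual_KG_module_dual grp hK) 1%N isT.
Qed.
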